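(* Let $\bm{\theta}$ be a target model with softmax outputs $f_{\bm{\theta}}(\bm{x})$, let $p(\boldsymbol{\phi})$ be a (prior/shadow) distribution over model parameters, let $\pi$ be the data population distribution over feature–label pairs, with the target samples belonging to the population, and let $\lambda\in(0,1)$. Define the BASE score \[ \Lambda_{\textsc{BASE}}(\bm{x}_i,y_i;\bm{\theta}) = \sigma\left(-\ell(f_{\bm{\theta}}(\bm{x}_i),y_i) - \log\int e^{-\ell(f_{\boldsymbol{\phi}}(\bm{x}_i),y_i)}p(\boldsymbol{\phi})\,\mathrm{d}\boldsymbol{\phi} + \log\frac{\lambda}{1-\lambda}\right) \] and the RMIA score with parameter $\gamma$ \[ \Lambda_{\textsc{RMIA}}(\bm{x}_i,y_i;\bm{\theta}) = \Pr_{(\bm{x}_j,y_j)\sim\pi}\left[\frac{p(\bm{\theta}\mid\bm{x}_i,y_i)}{p(\bm{\theta}\mid\bm{x}_j,y_j)} \geq \gamma\right], \] where the likelihood ratio is evaluated as $\frac{p(\bm{\theta}\mid\bm{x}_i,y_i)}{p(\bm{\theta}\mid\bm{x}_j,y_j)}=\frac{p(y_i\mid\bm{x}_i,\bm{\theta})/p(y_i\mid\bm{x}_i)}{p(y_j\mid\bm{x}_j,\bm{\theta})/p(y_j\mid\bm{x}_j)}$ with $p(y\mid\bm{x},\bm{\theta})=f_{\bm{\theta}}(\bm{x})_y$ and $p(y\mid\bm{x})=\mathbb{E}_{\boldsymbol{\phi}\sim p(\boldsymbol{\phi})}[f_{\boldsymbol{\phi}}(\bm{x})_y]$. Then the BASE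 attack is equivalent to the RMIA attack with $\gamma=1$; more precisely, the RMIA scores with $\gamma=1$ are related to the BASE scores via a monotone increasing function.
   Context: $\ell(f_{\bm{\theta}}(\bm{x}),y)=-\log f_{\bm{\theta}}(\bm{x})_y$ is the negative log-likelihood loss, and $\sigma$ is the sigmoid function. A score-based membership inference attack predicts ''member'' for target samples whose score exceeds a decision threshold; two score-based attacks are equivalent if for any decision threshold for one attack there exists a decision threshold for the other attack yielding identical hard predictions (in particular they have identical ROC curves). *)

From HB Require Import structures.
From mathcomp Require Import all_boot all_order all_algebra.
From mathcomp Require Import all_classical all_reals all_analysis.
Set Implicit Arguments. Unset Strict Implicit. Unset Printing Implicit Defensive.
Import Order.TTheory GRing.Theory Num.Theory.
Local Open Scope classical_set_scope.
Local Open Scope ring_scope.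

Section MIA.
Context {R : realType} {dP dX dY : measure_display}
  {Phi : measurableType dP} {X : measurableType dX} {Y : measurableType dY}.

(* f phi x y = f_phi(x)_y : softmax output of model with parameters phi *)
Variable f : Phi -> X -> Y -> R.

Definition sigmoid (t : R) : R := 1 / (1 + expR (- t)).

Definition nll (phi : Phi) (x : X) (y : Y) : R := - ln (f phi x y).

Definition base_score (p : probability Phi R) (theta : Phi) (lam : R)
    (x : X) (y : Y) : R :=
  sigmoid (- nll theta x y
           - ln (fine (\int[p]_phi (expR (- nll phi x y))%:E))
           + ln (lam / (1 - lam))).

Definition marg_lik (p : probability Phi R) (x : X) (y : Y) : R :=
  fine (\int[p]_phi (f phi x y)%:E).

Definition lik_ratio (p : probability Phi R) (theta : Phi)
    (xi : X) (yi : Y) (xj : X) (yj : Y) : R :=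
  (f theta xi yi / marg_lik p xi yi) / (f theta xj yj / marg_lik p xj yj).

Definition rmia_score (p : probability Phi R) (pi : probability (X * Y)%type R)
    (theta : Phi) (gamma : R) (x : X) (y : Y) : R :=
  fine (pi [set z : X * Y | gamma <= lik_ratio p theta x y z.1 z.2]).

End MIA.

From HB Require Import structures.
From mathcomp Require Import all_boot all_order all_algebra.
From mathcomp Require Import all_classical all_reals all_analysis.
From mathcomp Require Import measurable_realfun.
Import Order.TTheory GRing.Theory Num.Theory.
Local Open Scope classical_set_scope.
Local Open Scope ring_scope.

(* Write r(x, y) = f_theta(x)_y / p(y | x) for the calibrated likelihood.  The
   BASE score is sigmoid (ln r + ln (lam / (1 - lam))), a strictly increasing
   function of r, while with gamma = 1 the RMIA ratio is r(x, y) / r(z) >= 1.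
   Hence RMIA(x, y) = pi[r <= r(x, y)] = pi[BASE <= BASE(x, y)]: the monotone
   map is the distribution function of the BASE score under pi. *)

Lemma ler_sigmoid (R : realType) : {mono @sigmoid R : a b / a <= b}.
Proof.
move=> a b; rewrite /sigmoid !div1r lef_pV2 ?posrE ?addr_gt0 ?expR_gt0 //.
by rewrite lerD2l ler_expR lerN2.
Qed.

Lemma measurable_sigmoid (R : realType) : measurable_fun [set: R] sigmoid.
Proof. by apply: nondecreasing_measurable => // a b; rewrite ler_sigmoid. Qed.

Lemma probability_integral_gt0 d (T : measurableType d) (R : realType)
    (P : probability T R) (h : T -> R) :
  measurable_fun [set: T] h -> (forall t, 0 < h t <= 1) ->
  0 < fine (\int[P]_t (h t)%:E).
Proof.
move=> mh h01; have mEh : measurable_fun [set: T] (EFin \o h) by exact/measurable_EFinP.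
have h_ge0 t : 0 <= h t by case/andP: (h01 t) => /ltW.
have int_ge0 : (0 <= \int[P]_t (h t)%:E)%E.
  by apply: integral_ge0 => t _; rewrite lee_fin.
have int_le1 : (\int[P]_t (h t)%:E <= 1)%E.
  rewrite -(probability_setT P) -[P setT]mul1e -integral_cst //.
  apply: ge0_le_integral => //; first by move=> t _; rewrite lee_fin.
  by move=> t _; rewrite lee_fin; case/andP: (h01 t).
have int_neq0 : (\int[P]_t (h t)%:E != 0)%E.
  apply/eqP => int0.
  have : (\int[P]_(t in setT) `|(h t)%:E| = 0)%E.
    by rewrite -int0; apply: eq_integral => t _; rewrite gee0_abs ?lee_fin.
  case/(ae_eq_integral_abs P measurableT mEh) => N [mN PN0 sub].
  suff : P setT = 0%E by rewrite probability_setT => /eqP; rewrite onee_eq0.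
  apply/eqP; rewrite eq_le measure_ge0 andbT -PN0 le_measure ?inE //.
  move=> t _; apply: sub => /= /(_ I) /eqP; rewrite eqe.
  by case/andP: (h01 t) => /lt0r_neq0 /negbTE ->.
apply: fine_gt0; rewrite lt0e int_neq0 int_ge0 /=.
by rewrite (le_lt_trans int_le1) ?ltey.
Qed.

Section base_vs_rmia.
Context {R : realType} {dP dX dY : measure_display}
  {Phi : measurableType dP} {X : measurableType dX} {Y : measurableType dY}.
Variable f : Phi -> X -> Y -> R.
Hypothesis f_softmax : forall phi x y, 0 < f phi x y <= 1.
Hypothesis f_meas_phi : forall x y, measurable_fun setT (fun phi => f phi x y).
Variables (p : probability Phi R) (theta : Phi).

Let f_gt0 phi x y : 0 < f phi x y. Proof. by case/andP: (f_softmax phi x y). Qed.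

Lemma marg_lik_gt0 x y : 0 < marg_lik f p x y.
Proof. exact: probability_integral_gt0. Qed.

Definition calibrated_lik x y : R := f theta x y / marg_lik f p x y.

Lemma calibrated_lik_gt0 x y : 0 < calibrated_lik x y.
Proof. by rewrite divr_gt0 ?marg_lik_gt0. Qed.

Lemma base_scoreE lam x y : base_score f p theta lam x y =
  sigmoid (ln (f theta x y) - ln (marg_lik f p x y) + ln (lam / (1 - lam))).
Proof.
rewrite /base_score /marg_lik /nll.
under eq_integral => phi _ do rewrite opprK lnK ?posrE //.
by rewrite opprK.
Qed.

Lemma ler_base_score lam x y x' y' :
  (base_score f p theta lam x y <= base_score f p theta lam x' y') =
  (calibrated_lik x y <= calibrated_lik x' y').
Proof.
rewrite !base_scoreE ler_sigmoid lerD2r -!ln_div ?posrE ?marg_lik_gt0 //.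
by rewrite ler_ln ?posrE ?calibrated_lik_gt0.
Qed.

Lemma rmia_score1E (pi : probability (X * Y)%type R) x y :
  rmia_score f p pi theta 1 x y =
  fine (pi [set z | calibrated_lik z.1 z.2 <= calibrated_lik x y]).
Proof.
rewrite /rmia_score; congr (fine (pi _)); apply/funext => z /=.
by rewrite ler_pdivlMr ?mul1r ?calibrated_lik_gt0.
Qed.

Hypothesis f_meas_data : measurable_fun setT (fun z : X * Y => f theta z.1 z.2).
Hypothesis marg_meas : measurable_fun setT (fun z : X * Y => marg_lik f p z.1 z.2).

Lemma measurable_base_score lam :
  measurable_fun setT (fun z : X * Y => base_score f p theta lam z.1 z.2).
Proof.
rewrite (funext (fun z => base_scoreE lam z.1 z.2)).
apply: measurableT_comp; first exact: measurable_sigmoid.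
apply: measurable_funD => //; apply: measurable_funB;
  exact: measurableT_comp (@measurable_ln R) _.
Qed.

End base_vs_rmia.

Theorem theorem2 (R : realType) (dP dX dY : measure_display)
  (Phi : measurableType dP) (X : measurableType dX) (Y : measurableType dY)
  (f : Phi -> X -> Y -> R)
  (f_softmax : forall phi x y, 0 < f phi x y <= 1)
  (f_meas_phi : forall x y, measurable_fun setT (fun phi => f phi x y))
  (p : probability Phi R) (pi : probability (X * Y)%type R) (theta : Phi)
  (f_meas_data : measurable_fun setT (fun z : X * Y => f theta z.1 z.2))
  (marg_meas : measurable_fun setT (fun z : X * Y => marg_lik f p z.1 z.2))
  (lam : R) (lam_gt0 : 0 < lam) (lam_lt1 : lam < 1) :
  exists g : R -> R, {homo g : a b / a <= b} /\
    forall (x : X) (y : Y),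
      rmia_score f p pi theta 1 x y = g (base_score f p theta lam x y).
Proof.
(* [lam] only shifts the logit by a constant. *)
have mbase : measurable_fun setT (fun z : X * Y => base_score f p theta lam z.1 z.2).
  exact: measurable_base_score.
pose base : {RV pi >-> R} := mfun_Sub (mem_set mbase).
exists (fine \o cdf base); split.
  by move=> a b ab; apply: fine_le; rewrite ?fin_num_measure // cdf_nondecreasing.
move=> x y; rewrite rmia_score1E //=; congr (fine (pi _)).
by apply/funext => z /=; rewrite in_itv /= ler_base_score.
Qed.
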